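(* Let $N\ge2$, let $q\in\mathbb{C}$ with $[k]_q\ne0$ for $1\le k\le N$, and let $z_1,\dots,z_N$ lie in the open unit disk. Fix $\sigma\in\mathbb{S}_N$. For $1\le i\le N-1$ let $T_i:\mathbb{S}_N\to\mathbb{S}_N$ be the map $T_i\sigma=\tilde\sigma$ with $\tilde\sigma(N-i)=\sigma(N-i+1)$, $\tilde\sigma(N-i+1)=\sigma(N-i)$ and $\tilde\sigma(k)=\sigma(k)$ otherwise, and let $T_0$ be the identity. Then $$\sum_{i=0}^{N-1}q^i\,F^{(N)}_{(T_i\cdots T_0)\sigma}\Big|_{z_{\sigma(N)}=0}=F^{(N-1)}_{\sigma'},$$ where $F^{(N-1)}_{\sigma'}:=\Phi_{N-1}(z_{\sigma(1)},\dots,z_{\sigma(N-1)})$.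
   Context: $[k]_q=1+q+\cdots+q^{k-1}$, $[k]_q!=[1]_q\cdots[k]_q$. For $M\ge1$ and $w_1,\dots,w_M$ in the open unit disk define $t_i=\dfrac{w_1\cdots w_{M-i}}{1-w_1\cdots w_{M-i}}$ for $1\le i\le M-1$ and $$\Phi_M(w_1,\dots,w_M)=\frac{1}{1-w_1\cdots w_M}\sum_{(m_1,\dots,m_n)}\frac{1}{[m_1]_q!\cdots[m_n]_q!}\,t_{m_1}t_{m_1+m_2}\cdots t_{m_1+\cdots+m_{n-1}},$$ the sum running over all compositions $(m_1,\dots,m_n)$ of $M$ (ordered tuples of positive integers summing to $M$, any $n\ge1$; for $n=1$ the product of $t$'s is $1$). For $\sigma\in\mathbb{S}_M$ set $F^{(M)}_\sigma=\Phi_M(z_{\sigma(1)},\dots,z_{\sigma(M)})$. *)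

From HB Require Import structures.
From mathcomp Require Import all_boot all_order all_algebra all_fingroup.
Set Implicit Arguments. Unset Strict Implicit. Unset Printing Implicit Defensive.
Import Order.TTheory GRing.Theory Num.Theory.
Local Open Scope ring_scope.

Section Defs.
Variable R : fieldType.

Definition qint (q : R) (k : nat) : R := \sum_(i < k) q ^+ i.

Definition qfact (q : R) (k : nat) : R := \prod_(1 <= j < k.+1) qint q j.

Definition tvar (w : seq R) (i : nat) : R :=
  let P := \prod_(x <- take (size w - i) w) x in P / (1 - P).

(* Compositions (m_1,...,m_n) of M are
   enumerated as n-tuples (n <= M) of positive integers <= M summing to M;
   the product of t's is t_{m_1} t_{m_1+m_2} ... t_{m_1+...+m_{n-1}}. *)
Definition Phi (q : R) (w : seq R) : R :=
  let M := size w in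
  (1 - \prod_(x <- w) x)^-1 *
  \sum_(n < M.+1)
    \sum_(t : n.-tuple 'I_M.+1 |
            all (fun i : 'I_M.+1 => 0 < (i : nat))%N t
            && (sumn (map val t) == M)%N)
      ((\prod_(m <- t) (qfact q m)^-1) *
       \prod_(1 <= j < n) tvar w (sumn (take j (map val t)))).

(* T_i on S_N with N = n.+2 (1-based description in the paper: swap the
   values at positions N-i and N-i+1, i.e. 0-based positions N-i-1, N-i);
   T_0 = identity.  (tperm a b * s) k = s (tperm a b k). *)
Definition Tmap (n : nat) (i : nat) (s : 'S_n.+2) : 'S_n.+2 :=
  if i == 0%N then s
  else (tperm (inord (n.+1 - i)) (inord (n.+2 - i)) * s)%g.

Fixpoint Tcomp (n : nat) (i : nat) (s : 'S_n.+2) {struct i} : 'S_n.+2 :=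
  match i with
  | O => Tmap 0%N s
  | i'.+1 => Tmap i'.+1 (Tcomp i' s)
  end.

Definition F (n : nat) (q : R) (z : 'I_n.+2 -> R) (s : 'S_n.+2) : R :=
  Phi q [seq z (s k) | k <- enum 'I_n.+2].

End Defs.

From HB Require Import structures.
From mathcomp Require Import all_boot all_order all_algebra all_fingroup.
From mathcomp Require Import zify.
Set Implicit Arguments. Unset Strict Implicit. Unset Printing Implicit Defensive.
Import Order.TTheory GRing.Theory Num.Theory.
Local Open Scope ring_scope.

(* Idea of the proof (N = n.+2).
   Phi_M is a sum over the compositions c = (m_1, ..., m_k) of M of
   W(c) T_t(c), with W(c) = prod 1/[m_j]_q! and T_t(c) = t_{m_1} t_{m_1+m_2} ...
   In the word of F^(N)_{(T_i...T_0) s} the variable z_{s(N)} sits at 0-based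
   position N-1-i and is preceded by z_{s(1)}, ..., z_{s(N-1-i)}.  Once it is
   set to 0, the total product vanishes (the prefactor of Phi becomes 1) and
   t_k is the t_k of the word A = (z_{s(1)}, ..., z_{s(N-1)}) when k > i and
   0 when k <= i.  So the i-th term only keeps compositions with m_1 > i, and
   the weights q^i add up to [m_1]_q.  Splitting the compositions of N into
   1 :: c' and (m'_1 + 1) :: c'' (c', c'' compositions of N-1) and using
   [m+1]_q / [m+1]_q! = 1 / [m]_q! yields (1 + t_1) times the sum defining
   Phi_{N-1}(A), and 1 + t_1 = 1 / (1 - z_{s(1)} ... z_{s(N-1)}). *)

Definition comps_len (M k : nat) : seq (seq nat) :=
  [seq map val (tval t) | t <- enum [pred t : k.-tuple 'I_M.+1 |
     all (fun i : 'I_M.+1 => 0 < (i : nat))%N t && (sumn (map val t) == M)%N]].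

Definition comps (M : nat) : seq (seq nat) :=
  [seq c | k <- iota 0 M.+1, c <- comps_len M k].

Lemma mem_le_sumn (s : seq nat) x : x \in s -> (x <= sumn s)%N.
Proof.
elim: s => //= y s IH; rewrite inE => /orP[/eqP->|/IH]; first exact: leq_addr.
by move=> h; apply: leq_trans h (leq_addl _ _).
Qed.

Lemma size_le_sumn (s : seq nat) :
  all (fun x => 0 < x)%N s -> (size s <= sumn s)%N.
Proof. by elim: s => //= y s IH /andP[hy /IH h]; rewrite -add1n leq_add. Qed.

Lemma mem_comps_len M k c :
  (c \in comps_len M k) = [&& size c == k, all (fun x => 0 < x)%N c & sumn c == M].
Proof.
apply/idP/idP.
  case/mapP=> t; rewrite mem_enum inE => /andP[h1 h2] ->.
  by rewrite size_map size_tuple eqxx all_map h2 andbT.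
case/and3P=> /eqP hk hpos /eqP hsum.
have valK : map val (map (@inord M) c) = c.
  rewrite -map_comp -{2}(map_id c); apply/eq_in_map => x /mem_le_sumn hx /=.
  by rewrite inordK // ltnS -hsum.
have hsz : size (map (@inord M) c) == k by rewrite size_map hk.
apply/mapP; exists (Tuple hsz); last by rewrite /= valK.
rewrite mem_enum inE /= valK hsum eqxx andbT all_map.
apply/allP => x hx /=; rewrite inordK ?ltnS -?hsum ?mem_le_sumn //.
exact: (allP hpos).
Qed.

Lemma mem_comps M c : (c \in comps M) = all (fun x => 0 < x)%N c && (sumn c == M).
Proof.
apply/idP/idP.
  by case/allpairsPdep=> k [x [_ + ->]]; rewrite mem_comps_len => /and3P[_ -> ->].
move=> /andP[hpos hsum]; apply/allpairsPdep; exists (size c), c; split => //.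
  by rewrite mem_iota /= ltnS -(eqP hsum) size_le_sumn.
by rewrite mem_comps_len eqxx hpos hsum.
Qed.

Lemma head_comps_le M c : c \in comps M -> (head 0%N c <= M)%N.
Proof. by rewrite mem_comps; case: c => //= a r /andP[_ /eqP <-]; apply: leq_addr. Qed.

Lemma uniq_comps M : uniq (comps M).
Proof.
apply: allpairs_uniq_dep; first exact: iota_uniq.
  move=> k _; rewrite map_inj_uniq ?enum_uniq // => t1 t2 h.
  by apply: val_inj; apply: (inj_map val_inj).
move=> [k1 x1] [k2 x2] /allpairsPdep[a [b [_ hb [-> ->]]]]
   /allpairsPdep[c [d [_ hd [-> ->]]]] /= hbd.
by move: hb hd; rewrite !mem_comps_len hbd => /and3P[/eqP <- _ _] /and3P[/eqP <- _ _].
Qed.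

Definition incr_head (c : seq nat) : seq nat :=
  if c is m :: r then m.+1 :: r else [:: 1%N].

Lemma comps_split M : perm_eq (comps M.+2)
  ([seq incr_head c | c <- comps M.+1] ++ [seq 1%N :: c | c <- comps M.+1]).
Proof.
apply: uniq_perm; first exact: uniq_comps.
  rewrite cat_uniq !map_inj_in_uniq ?uniq_comps //=; last 2 first.
  - by move=> c d _ _ [].
  - move=> [|a c] [|b d]; rewrite !mem_comps //= => _ _ [-> ->] //.
  rewrite andbT; apply/hasPn => x /mapP[c _ ->]; apply/mapP => -[d].
  by rewrite mem_comps; case: d => [|[|a] d] //=; rewrite andbF.
move=> x; rewrite mem_comps mem_cat; apply/idP/idP.
  case: x => [|[|[|a]] c] //= /andP[hc /eqP [hsum]].
  - apply/orP; right; apply/mapP; exists c => //.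
    by rewrite mem_comps hc -hsum eqxx.
  - apply/orP; left; apply/mapP; exists (a.+1 :: c) => //.
    by rewrite mem_comps /= hc addSn hsum eqxx.
case/orP=> /mapP[c]; rewrite mem_comps => /andP[hc /eqP hsum] ->.
  by case: c hc hsum => [|a c] //= /andP[_ ->]; rewrite addSn => ->; rewrite eqxx.
by rewrite /= hc hsum add1n eqxx.
Qed.

Section CompositionSums.
Variable R : fieldType.
Implicit Types (q : R) (t : nat -> R).

Definition compW q (c : seq nat) : R := \prod_(m <- c) (qfact q m)^-1.

Definition compT t (c : seq nat) : R := \prod_(1 <= j < size c) t (sumn (take j c)).

Lemma Phi_comps q (w : seq R) :
  Phi q w = (1 - \prod_(x <- w) x)^-1 *
    \sum_(c <- comps (size w)) compW q c * compT (tvar w) c.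
Proof.
rewrite /Phi /comps big_allpairs_dep; congr (_ * _).
rewrite -(big_mkord xpredT (fun k => \sum_(t : k.-tuple 'I_(size w).+1 |
   all (fun i : 'I_(size w).+1 => 0 < (i : nat))%N t
            && (sumn (map val t) == size w)%N)
      ((\prod_(m <- t) (qfact q m)^-1) *
       \prod_(1 <= j < k) tvar w (sumn (take j (map val t)))))).
rewrite /index_iota subn0; apply: eq_bigr => k _.
rewrite /comps_len big_map big_enum_cond /=.
apply: eq_big => [t|t _]; first by rewrite andbT.
by rewrite /compW /compT big_map size_map size_tuple /index_iota.
Qed.

Lemma compT_cut t i M c : c \in comps M -> (i < M)%N ->
  compT (fun k => if (i < k)%N then t k else 0) c
  = if (i < head 0%N c)%N then compT t c else 0.
Proof.
rewrite mem_comps /compT; case: c => [|a r] /=; first by move=> /eqP <-.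
move=> /andP[_ /eqP hs] hiM; case: ifP => hia.
  apply: eq_big_nat => -[|j] //= _; by rewrite ifT // ltn_addr.
case: r hs => [|b r] hs; first by rewrite /= addn0 in hs; rewrite hs hiM in hia.
by rewrite big_nat_recl //= addn0 hia mul0r.
Qed.

Lemma sum_qpow_cut q t M c : c \in comps M ->
  \sum_(i < M) q ^+ i * (compW q c * compT (fun k => if (i < k)%N then t k else 0) c)
  = qint q (head 0%N c) * (compW q c * compT t c).
Proof.
move=> hc; under eq_bigr => i _ do rewrite (compT_cut t hc (ltn_ord i)).
rewrite /qint (big_ord_widen _ _ (head_comps_le hc)) big_distrl /=.
rewrite (big_mkcond (fun i : 'I_M => (i < head 0 c)%N)).
by apply: eq_bigr => i _; case: ifP; rewrite ?mulr0 ?mul0r.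
Qed.

Lemma qint_div_qfact q m : qint q m.+1 != 0 ->
  qint q m.+1 * (qfact q m.+1)^-1 = (qfact q m)^-1.
Proof. by move=> hq; rewrite /qfact big_nat_recr //= invfM mulrCA mulfV ?mulr1. Qed.

(* Increasing the first part shifts every partial sum by one. *)
Lemma compT_incr_head t a r :
  compT t (a.+1 :: r) = compT (fun k => t k.+1) (a :: r).
Proof. by apply: eq_big_nat => -[|j]. Qed.

Lemma compT_cons1 t a r :
  compT t [:: 1%N, a & r] = t 1%N * compT (fun k => t k.+1) (a :: r).
Proof. by rewrite /compT /= big_nat_recl //= addn0. Qed.

Lemma comps_qint_sum q t M :
  (forall k, (1 <= k <= M.+2)%N -> qint q k != 0) ->
  \sum_(c <- comps M.+2) qint q (head 0%N c) * (compW q c * compT t c)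
  = (1 + t 1%N) * \sum_(c <- comps M.+1) compW q c * compT (fun k => t k.+1) c.
Proof.
move=> hq; rewrite (perm_big _ (comps_split M)) big_cat /= !big_map -big_split.
rewrite big_distrr /=; apply: eq_big_seq => -[|a r]; rewrite mem_comps //=.
move=> /andP[_ /eqP hs]; rewrite mulrDl mul1r; congr (_ + _).
  rewrite /compW !big_cons !mulrA qint_div_qfact ?compT_incr_head //.
  by apply: hq; rewrite /= ltnS -hs leq_addr.
have q1 : qint q 1 = 1 by rewrite /qint big_ord1 expr0.
have f1 : qfact q 1 = 1 by rewrite /qfact big_nat1 q1.
by rewrite q1 mul1r /compW big_cons f1 invr1 mul1r compT_cons1 mulrCA.
Qed.

End CompositionSums.

Section PrefixProducts.
Variable R : fieldType.

Definition pprod (a : nat -> R) (m : nat) : R := \prod_(0 <= l < m) a l.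

Definition tseq (a : nat -> R) (N k : nat) : R :=
  pprod a (N - k) / (1 - pprod a (N - k)).

Lemma prod_take_mkseq (a : nat -> R) j N :
  \prod_(x <- take j (mkseq a N)) x = pprod a (minn j N).
Proof. by rewrite /mkseq -map_take take_iota big_map /pprod /index_iota subn0. Qed.

Lemma tvar_mkseq (a : nat -> R) N k : tvar (mkseq a N) k = tseq a N k.
Proof. by rewrite /tvar size_mkseq prod_take_mkseq (minn_idPl (leq_subr _ _)). Qed.

Lemma Phi_mkseq (q : R) (a : nat -> R) N :
  Phi q (mkseq a N) =
    (1 - pprod a N)^-1 * \sum_(c <- comps N) compW q c * compT (tseq a N) c.
Proof.
rewrite Phi_comps size_mkseq -{1}(take_size (mkseq a N)) size_mkseq.
rewrite prod_take_mkseq minnn; congr (_ * _); apply: eq_bigr => c _.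
by congr (_ * _); apply: eq_bigr => j _; rewrite tvar_mkseq.
Qed.

Lemma pprod_zero (a : nat -> R) p m : (p < m)%N -> a p = 0 -> pprod a m = 0.
Proof. by move=> hp ha; rewrite /pprod big_mkord (bigD1 (Ordinal hp)) //= ha mul0r. Qed.

Lemma tseq_zero (a b : nat -> R) N p k : (p < N)%N -> a p = 0 ->
  (forall l, (l < p)%N -> a l = b l) ->
  tseq a N k = if (N - k <= p)%N then tseq b N k else 0.
Proof.
move=> hpN hap hab; rewrite /tseq; case: ifP => hk.
  suff -> : pprod a (N - k) = pprod b (N - k) by [].
  by apply: eq_big_nat => l /andP[_ hl]; apply: hab; apply: leq_trans hk.
by rewrite (@pprod_zero _ p) ?mul0r // ltnNge hk.
Qed.

Lemma one_add_tseq (a : nat -> R) N :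
  1 - pprod a N != 0 -> 1 + tseq a N.+1 1 = (1 - pprod a N)^-1.
Proof. by move=> h; rewrite /tseq subSS subn0 -{1}(divff h) -mulrDl subrK mul1r. Qed.

End PrefixProducts.

Lemma pprod_neq1 (R : numFieldType) (a : nat -> R) m :
  (forall l, `|a l| < 1) -> 1 - pprod a m.+1 != 0.
Proof.
move=> ha; have : `|pprod a m.+1| < 1.
  rewrite /pprod normr_prod; elim: m => [|m IH]; first by rewrite big_nat1.
  by rewrite big_nat_recr //= mulr_ilt1 // prodr_ge0.
by rewrite subr_eq0; apply: contraTneq => <-; rewrite normr1 ltxx.
Qed.

Lemma Tcomp_positions n (s : 'S_n.+2) i : (i <= n.+1)%N -> forall k : 'I_n.+2,
  ((k < n.+1 - i)%N -> Tcomp i s k = s k) /\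
  ((k : nat) = (n.+1 - i)%N -> Tcomp i s k = s ord_max).
Proof.
elim: i => [|i IH] hi k.
  rewrite /= /Tmap /= subn0; split => // hk; congr (s _); exact: val_inj.
have {}IH := IH (ltnW hi).
have ha : (n - i < n.+2)%N by lia.
have hb : (n.+1 - i < n.+2)%N by lia.
rewrite /= /Tmap /= permM !subSS; split => hk.
  rewrite tpermD; first by apply: (proj1 (IH k)); lia.
  - by apply/eqP => /(congr1 val) /=; rewrite inordK //; lia.
  - by apply/eqP => /(congr1 val) /=; rewrite inordK //; lia.
have -> : k = inord (n - i) by apply: val_inj; rewrite /= inordK.
by rewrite tpermL; apply: (proj2 (IH _)); rewrite /= inordK.
Qed.

Lemma map_enum_ord_mkseq (T : Type) n (f : 'I_n.+1 -> T) :
  [seq f k | k <- enum 'I_n.+1] = mkseq (fun l => f (inord l)) n.+1.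
Proof. by rewrite /mkseq -val_enum_ord -map_comp; apply: eq_map => k /=; rewrite inord_val. Qed.

Lemma F_Tcomp_zero (R : fieldType) n q (z : 'I_n.+2 -> R) (s : 'S_n.+2) (i : 'I_n.+2) :
  F q (fun j => if j == s ord_max then 0 else z j) (Tcomp i s) =
  \sum_(c <- comps n.+2) compW q c *
     compT (fun k => if (i < k)%N then tseq (fun l => z (s (inord l))) n.+2 k else 0) c.
Proof.
set zz := fun j => if j == _ then 0 else _; set A := fun l => z (s (inord l)).
pose a l := zz (Tcomp i s (inord l)).
have hi : (i <= n.+1)%N by rewrite -ltnS.
have hp : (n.+1 - i < n.+2)%N by lia.
have a0 : a (n.+1 - i)%N = 0.
  by rewrite /a (proj2 (Tcomp_positions s hi _)) ?inordK // /zz eqxx.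
have aA : forall l, (l < n.+1 - i)%N -> a l = A l.
  move=> l hl; rewrite /a (proj1 (Tcomp_positions s hi _)) ?inordK; try lia.
  rewrite /zz (inj_eq perm_inj) ifF //; apply/eqP => /(congr1 val) /=.
  rewrite inordK; lia.
rewrite /F map_enum_ord_mkseq Phi_mkseq -/a (pprod_zero hp a0) subr0 invr1 mul1r.
apply: eq_bigr => c _; congr (_ * _); apply: eq_bigr => j _.
rewrite (tseq_zero _ hp a0 aA); congr (if _ then _ else _); apply/idP/idP; lia.
Qed.

Theorem lemma5 (R : numClosedFieldType) (n : nat) (q : R)
  (hq : forall k : nat, (1 <= k <= n.+2)%N -> qint q k != 0)
  (z : 'I_n.+2 -> R) (hz : forall j, `|z j| < 1)
  (s : 'S_n.+2) :
  \sum_(i < n.+2)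
     q ^+ i * F q (fun j => if j == s ord_max then 0 else z j) (Tcomp i s)
  = Phi q [seq z (s k) | k <- take n.+1 (enum 'I_n.+2)].
Proof.
pose A l := z (s (inord l)).
have hA : 1 - pprod A n.+1 != 0 by apply: pprod_neq1 => l; apply: hz.
under eq_bigr => i _ do rewrite F_Tcomp_zero big_distrr.
rewrite exchange_big /= (eq_big_seq _ (fun c => @sum_qpow_cut _ q _ _ c)).
rewrite comps_qint_sum // one_add_tseq //.
rewrite map_take map_enum_ord_mkseq /mkseq -map_take take_iota minnSS.
by rewrite (minn_idPl (leqnSn n)) (Phi_mkseq q A n.+1).
Qed.
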